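(* Let $\Bbbk$ be a field of characteristic zero. For every $\lambda\in\Bbbk^*$, the Lie algebra $\mathcal O(\lambda)$ is not perfect, and therefore is not simple.
   Context: $\mathcal W=\Bbbk[t,t^{-1}]\partial$ is the Witt algebra with basis $L_n=-t^{n+1}\partial$ and $[L_n,L_m]=(n-m)L_{n+m}$. For $\lambda\in\Bbbk^*$, $\mathcal O(\lambda)$ is the subalgebra spanned by $L_n-\lambda^nL_{-n}$, $n\ge1$. A Lie algebra $\mathfrak g$ is perfect if $[\mathfrak g,\mathfrak g]=\mathfrak g$. *)

From HB Require Import structures.
From mathcomp Require Import all_boot all_order all_algebra.
From mathcomp Require Import finmap.
Set Implicit Arguments. Unset Strict Implicit. Unset Printing Implicit Defensive.
Import Order.TTheory GRing.Theory Num.Theory.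
Local Open Scope ring_scope.

(* The Witt algebra W = k[t,t^-1] d over a field k, described in the basis
   (L_n)_{n in Z}: an element is a finitely supported family of coordinates
   int -> k, the coordinate at n being the coefficient of L_n.
   The bracket is [L_a, L_b] = (a - b) L_(a+b), extended bilinearly. *)
Definition Witt (k : fieldType) := {fsfun int -> k with 0}.

Section Witt.
Variable k : fieldType.
Implicit Types (f g : Witt k) (c : k).

Definition wzero : Witt k := [fsfun with 0].

Definition wadd f g : Witt k :=
  [fsfun n in (finsupp f `|` finsupp g)%fset => f n + g n].

Definition wscale c f : Witt k :=
  [fsfun n in finsupp f => c * f n].

Definition wsum (s : seq (Witt k)) : Witt k := foldr wadd wzero s.

Definition wbr f g : Witt k :=
  [fsfun n in [fset (a + b)%R | a in finsupp f, b in finsupp g]%fset =>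
     \sum_(a <- finsupp f) \sum_(b <- finsupp g | (a + b)%R == n)
        ((a - b)%:~R * f a * g b)].

Definition Lb (n : int) : Witt k := [fsfun m in [fset n]%fset => 1].

Definition Ogen (lam : k) (n : nat) : Witt k :=
  wadd (Lb n%:Z) (wscale (- lam ^+ n) (Lb (- n%:Z))).

(* membership in O(lam) = span of L_n - lam^n L_{-n}, n >= 1
   (pairs (c, m) stand for c * (L_{m+1} - lam^{m+1} L_{-(m+1)})) *)
Definition inO (lam : k) (x : Witt k) : Prop :=
  exists s : seq (k * nat), x = wsum [seq wscale p.1 (Ogen lam p.2.+1) | p <- s].

Definition inDerO (lam : k) (x : Witt k) : Prop :=
  exists s : seq (Witt k * Witt k),
    (forall p, p \in s -> inO lam p.1 /\ inO lam p.2) /\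
    x = wsum [seq wbr p.1 p.2 | p <- s].

Definition O_perfect (lam : k) : Prop := forall x, inO lam x <-> inDerO lam x.

Definition O_ideal (lam : k) (I : Witt k -> Prop) : Prop :=
  [/\ forall x, I x -> inO lam x,
      I wzero,
      (forall x y, I x -> I y -> I (wadd x y)),
      (forall c x, I x -> I (wscale c x)) &
      (forall x y, inO lam x -> I y -> I (wbr x y))].

Definition O_simple (lam : k) : Prop :=
  (exists x y, [/\ inO lam x, inO lam y & wbr x y <> wzero]) /\
  (forall I, O_ideal lam I ->
     (forall x, I x -> x = wzero) \/ (forall x, inO lam x -> I x)).

End Witt.

From HB Require Import structures.
From mathcomp Require Import all_boot all_order all_algebra.
From mathcomp Require Import finmap.
From mathcomp Require Import ring.
Set Implicit Arguments. Unset Strict Implicit. Unset Printing Implicit Defensive.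
Import Order.TTheory GRing.Theory Num.Theory.
Local Open Scope ring_scope.

(* The functional wdot weight : x |-> sum_j weight j * x_j on W, where
   weight j = 0 for even j and weight j = j lam^((j-1)/2) for odd j, kills
   every bracket of two elements of O(lam): by bilinearity and
   [L_a, L_b] = (a - b) L_(a+b) it is enough to take two generators, and
   there the four resulting terms cancel because
   parity_pow (2m + j) = lam^m parity_pow j.  Since its value at
   L_1 - lam L_(-1) is 2 <> 0, the derived algebra is proper.  Its kernel
   in O(lam) contains [O(lam), O(lam)], hence is an ideal; it contains
   L_2 - lam^2 L_(-2) but not L_1 - lam L_(-1), so it is neither 0 nor O(lam). *)

Lemma big_uniq_supp (I : eqType) (R : nmodType) (r s : seq I) (P : pred I)
    (F : I -> R) :
  uniq r -> uniq s -> (forall i, F i != 0 -> (i \in r) && (i \in s)) ->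
  \sum_(i <- r | P i) F i = \sum_(i <- s | P i) F i.
Proof.
move=> ur us Frs; apply: perm_big_supp; apply: uniq_perm; rewrite ?filter_uniq //.
by move=> i; rewrite !mem_filter; case: (F i =P 0) => //= /eqP /Frs /andP [-> ->].
Qed.

Lemma big_pred1_uniq (I : eqType) (R : nmodType) (r : seq I) (i : I)
    (F : I -> R) :
  uniq r -> \sum_(j <- r | j == i) F j = if i \in r then F i else 0.
Proof.
move=> ur; case: ifP => ir; last first.
  by rewrite big1_seq // => j /andP [/eqP -> jr]; rewrite jr in ir.
rewrite (big_rem i) //= eqxx big1_seq ?addr0 // => j /andP [/eqP -> ].
by rewrite mem_rem_uniqF.
Qed.

Section WittAlgebra.
Variable k : fieldType.
Implicit Types (f g x : Witt k) (c : k) (a b n : int).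

Lemma wzeroE n : wzero k n = 0.
Proof. by rewrite fsfunE. Qed.

Lemma waddE f g n : wadd f g n = f n + g n.
Proof.
rewrite fsfunE in_fsetU !mem_finsupp.
by case: (f n =P 0) => [->|] /=; case: (g n =P 0) => [->|] //=; rewrite addr0.
Qed.

Lemma wscaleE c f n : wscale c f n = c * f n.
Proof. by rewrite fsfunE mem_finsupp; case: (f n =P 0) => [->|]; rewrite ?mulr0. Qed.

Lemma LbE a n : Lb k a n = (n == a)%:R.
Proof. by rewrite fsfunE in_fset1; case: eqP. Qed.

Lemma wsumE (s : seq (Witt k)) n : wsum s n = \sum_(x <- s) x n.
Proof. by elim: s => [|x s IH]; rewrite ?big_nil ?wzeroE // big_cons waddE IH. Qed.

Lemma finsupp_wscale c f : {subset finsupp (wscale c f) <= finsupp f}.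
Proof.
by move=> a; rewrite !mem_finsupp wscaleE; apply: contra_neq => ->; rewrite mulr0.
Qed.

Lemma finsupp_wzero : {subset finsupp (wzero k) <= [::]}.
Proof. by move=> a; rewrite mem_finsupp wzeroE eqxx. Qed.

Lemma finsupp_Lb a : {subset finsupp (Lb k a) <= [:: a]}.
Proof. by move=> n; rewrite mem_finsupp LbE inE; case: (n == a); rewrite ?eqxx. Qed.

Lemma finsupp_wadd f g :
  {subset finsupp (wadd f g) <= (finsupp f `|` finsupp g)%fset}.
Proof.
move=> a; rewrite mem_finsupp waddE in_fsetU !mem_finsupp.
by case: (f a =P 0) => [->|] //=; rewrite add0r.
Qed.

Lemma finsupp_bounded x : exists M, forall a, (M < `|a|)%N -> x a = 0.
Proof.
exists (\max_(a <- finsupp x) `|a|)%N => a; apply: contraTeq => xa.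
rewrite -leqNgt.
by apply: (@leq_bigmax_seq _ _ xpredT (fun a : int => `|a|%N)); rewrite ?mem_finsupp.
Qed.

Lemma wbrE f g (r s : seq int) : uniq r -> uniq s ->
    {subset finsupp f <= r} -> {subset finsupp g <= s} ->
  wbr f g =1 fun n => \sum_(a <- r) \sum_(b <- s | a + b == n)
                        (a - b)%:~R * f a * g b.
Proof.
move=> ur us fr gs n; rewrite /wbr fsfunE.
have term_supp a b : (a - b)%:~R * f a * g b != 0 ->
    (a \in finsupp f) && (b \in finsupp g).
  rewrite !mem_finsupp; apply: contraR => /nandP [] /negPn /eqP ->;
    by rewrite ?mulr0 ?mul0r.
case: ifP => [_ | n_img]; last first.
  rewrite big1 // => a _; rewrite big1 // => b /eqP abn; apply/eqP.
  apply: contraFT n_img => /term_supp /andP [af bg].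
  by rewrite -abn; apply: in_imfset2.
transitivity (\sum_(a <- finsupp f) \sum_(b <- s | a + b == n)
                (a - b)%:~R * f a * g b).
  apply: eq_bigr => a _; apply: big_uniq_supp; rewrite ?fset_uniq //.
  by move=> b /term_supp /andP [_ bg]; rewrite bg gs.
apply: big_uniq_supp; rewrite ?fset_uniq // => a Fa.
have af : a \in finsupp f.
  rewrite mem_finsupp; apply: contraNneq Fa => fa0.
  by rewrite big1 // => b _; rewrite fa0 mulr0 mul0r.
by rewrite af fr.
Qed.

Lemma wbr_addl f1 f2 g : wbr (wadd f1 f2) g = wadd (wbr f1 g) (wbr f2 g).
Proof.
set r := (finsupp f1 `|` finsupp f2)%fset.
have [f1r f2r] : {subset finsupp f1 <= r} /\ {subset finsupp f2 <= r}.
  by split=> a; rewrite in_fsetU => ->; rewrite ?orbT.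
apply/fsfunP => n; rewrite waddE !(wbrE (r := r) (s := finsupp g)) ?fset_uniq //;
  last exact: finsupp_wadd.
rewrite -big_split; apply: eq_bigr => a _; rewrite -big_split.
by apply: eq_bigr => b _; rewrite waddE /=; ring.
Qed.

Lemma wbr_addr f g1 g2 : wbr f (wadd g1 g2) = wadd (wbr f g1) (wbr f g2).
Proof.
set s := (finsupp g1 `|` finsupp g2)%fset.
have [g1s g2s] : {subset finsupp g1 <= s} /\ {subset finsupp g2 <= s}.
  by split=> a; rewrite in_fsetU => ->; rewrite ?orbT.
apply/fsfunP => n; rewrite waddE !(wbrE (r := finsupp f) (s := s)) ?fset_uniq //;
  last exact: finsupp_wadd.
rewrite -big_split; apply: eq_bigr => a _; rewrite -big_split.
by apply: eq_bigr => b _; rewrite waddE /=; ring.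
Qed.

Lemma wbr_scalel c f g : wbr (wscale c f) g = wscale c (wbr f g).
Proof.
apply/fsfunP => n; rewrite wscaleE.
rewrite !(wbrE (r := finsupp f) (s := finsupp g)) ?fset_uniq //;
  last exact: finsupp_wscale.
rewrite mulr_sumr; apply: eq_bigr => a _; rewrite mulr_sumr.
by apply: eq_bigr => b _; rewrite wscaleE; ring.
Qed.

Lemma wbr_scaler c f g : wbr f (wscale c g) = wscale c (wbr f g).
Proof.
apply/fsfunP => n; rewrite wscaleE.
rewrite !(wbrE (r := finsupp f) (s := finsupp g)) ?fset_uniq //;
  last exact: finsupp_wscale.
rewrite mulr_sumr; apply: eq_bigr => a _; rewrite mulr_sumr.
by apply: eq_bigr => b _; rewrite wscaleE; ring.
Qed.

Lemma wbr0l g : wbr (wzero k) g = wzero k.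
Proof.
apply/fsfunP => n; rewrite wzeroE (wbrE (r := [::]) (s := finsupp g)) ?fset_uniq //.
  by rewrite big_nil.
exact: finsupp_wzero.
Qed.

Lemma wbr0r f : wbr f (wzero k) = wzero k.
Proof.
apply/fsfunP => n; rewrite wzeroE (wbrE (r := finsupp f) (s := [::])) ?fset_uniq //.
  by rewrite big1 // => a _; rewrite big_nil.
exact: finsupp_wzero.
Qed.

Lemma wbr_Lb a b : wbr (Lb k a) (Lb k b) = wscale (a - b)%:~R (Lb k (a + b)).
Proof.
apply/fsfunP => n; rewrite wscaleE LbE.
rewrite (wbrE (r := [:: a]) (s := [:: b])) //; try exact: finsupp_Lb.
rewrite !big_cons !big_nil !LbE !eqxx addr0 eq_sym.
by case: (n == a + b); rewrite ?addr0 ?mulr1 ?mulr0.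
Qed.

Definition wdot (w : int -> k) x : k := \sum_(n <- finsupp x) w n * x n.

Lemma wdotE w x (r : seq int) : uniq r -> {subset finsupp x <= r} ->
  wdot w x = \sum_(n <- r) w n * x n.
Proof.
move=> ur xr; apply: big_uniq_supp; rewrite ?fset_uniq // => n wx.
have xn : n \in finsupp x.
  by rewrite mem_finsupp; apply: contraNneq wx => ->; rewrite mulr0.
by rewrite xn xr.
Qed.

Lemma wdot_add w f g : wdot w (wadd f g) = wdot w f + wdot w g.
Proof.
set r := (finsupp f `|` finsupp g)%fset.
have [fr gr] : {subset finsupp f <= r} /\ {subset finsupp g <= r}.
  by split=> a; rewrite in_fsetU => ->; rewrite ?orbT.
rewrite !(wdotE w (r := r)) ?fset_uniq //; last exact: finsupp_wadd.
by rewrite -big_split; apply: eq_bigr => n _; rewrite waddE mulrDr.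
Qed.

Lemma wdot_scale w c f : wdot w (wscale c f) = c * wdot w f.
Proof.
rewrite !(wdotE w (r := finsupp f)) ?fset_uniq //; last exact: finsupp_wscale.
by rewrite mulr_sumr; apply: eq_bigr => n _; rewrite wscaleE mulrCA.
Qed.

Lemma wdot0 w : wdot w (wzero k) = 0.
Proof. by rewrite (wdotE w (r := [::])) ?big_nil //; exact: finsupp_wzero. Qed.

Lemma wdot_wsum w (s : seq (Witt k)) : wdot w (wsum s) = \sum_(x <- s) wdot w x.
Proof.
by elim: s => [|x s IH]; rewrite ?big_nil ?wdot0 // big_cons wdot_add IH.
Qed.

Lemma wdot_Lb w a : wdot w (Lb k a) = w a.
Proof.
rewrite (wdotE w (r := [:: a])) //; last exact: finsupp_Lb.
by rewrite big_seq1 LbE eqxx mulr1.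
Qed.

End WittAlgebra.

Section SubalgebraO.
Variables (k : fieldType) (lam : k).
Implicit Types (f g x y : Witt k) (c : k).

Lemma OgenE (n : nat) a :
  Ogen lam n a = (a == n%:Z)%:R - lam ^+ n * (a == - n%:Z)%:R.
Proof. by rewrite waddE wscaleE !LbE mulNr. Qed.

Lemma Ogen_neq0 n : Ogen lam n.+1 != wzero k.
Proof.
apply/eqP => /fsfunP /(_ n.+1%:Z) /eqP.
by rewrite OgenE wzeroE eqxx /= mulr0 subr0 oner_eq0.
Qed.

Lemma inO_Ogen n : inO lam (Ogen lam n.+1).
Proof.
exists [:: (1, n)]; apply/fsfunP => a.
by rewrite /= waddE wscaleE wzeroE mul1r addr0.
Qed.

Lemma inO_ind (P : Witt k -> Prop) :
    P (wzero k) -> (forall x y, P x -> P y -> P (wadd x y)) ->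
    (forall c x, P x -> P (wscale c x)) -> (forall n, P (Ogen lam n.+1)) ->
  forall x, inO lam x -> P x.
Proof.
move=> P0 PD PZ Pgen x [s ->]; elim: s => [|[c n] s IH] //=.
exact/PD/IH/PZ.
Qed.

Lemma inO_add x y : inO lam x -> inO lam y -> inO lam (wadd x y).
Proof.
move=> [s ->] [t ->]; exists (s ++ t); apply/fsfunP => a.
by rewrite waddE !wsumE map_cat big_cat.
Qed.

Lemma inO_scale c x : inO lam x -> inO lam (wscale c x).
Proof.
move=> [s ->]; exists [seq (c * p.1, p.2) | p <- s]; apply/fsfunP => a.
rewrite wscaleE !wsumE -map_comp !big_map mulr_sumr.
by apply: eq_bigr => p _; rewrite /= !wscaleE mulrA.
Qed.

(* O(lam) is the fixed-point subalgebra of the involutive automorphism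
   L_n |-> - lam^n L_(-n) of W; this is how it is seen to be closed under the
   bracket. *)
Definition sigma_fixed x := forall a : int, x (- a) = - lam ^ a * x a.

Lemma sigma_fixed0 : sigma_fixed (wzero k).
Proof. by move=> a; rewrite !wzeroE mulr0. Qed.

Lemma sigma_fixed_add x y :
  sigma_fixed x -> sigma_fixed y -> sigma_fixed (wadd x y).
Proof. by move=> hx hy a; rewrite !waddE hx hy mulrDr. Qed.

Lemma sigma_fixed_scale c x : sigma_fixed x -> sigma_fixed (wscale c x).
Proof. by move=> hx a; rewrite !wscaleE hx mulrCA. Qed.

Lemma sigma_fixed_coord0 x : (2%:R : k) != 0 -> sigma_fixed x -> x 0 = 0.
Proof.
move=> two_neq0 /(_ 0); rewrite oppr0 expr0z mulN1r => /eqP.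
rewrite -subr_eq0 opprK -mulr2n -mulr_natl mulf_eq0 (negPf two_neq0).
by move/eqP.
Qed.

Lemma sigma_fixed_inO x : (2%:R : k) != 0 -> sigma_fixed x -> inO lam x.
Proof.
move=> two_neq0 hx; have [M x_out] := finsupp_bounded x.
have pick (F : nat -> k) j :
    \sum_(n <- iota 0 M) (if n == j then F n else 0) = if (j < M)%N then F j else 0.
  by rewrite -big_mkcond big_pred1_uniq ?iota_uniq // mem_iota.
exists [seq (x n.+1%:Z, n) | n <- iota 0 M].
apply/fsfunP => a; rewrite wsumE -map_comp big_map.
under eq_bigr do rewrite /= wscaleE OgenE.
case: a => [[|j]|j].
- rewrite sigma_fixed_coord0 // big1 // => n _.
  by rewrite mulr0 subr0 mulr0.
- rewrite (eq_bigr (fun n => if n == j then x n.+1%:Z else 0)) => [|n _]; last first.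
    have -> : (Posz j.+1 == Posz n.+1) = (n == j) by rewrite eq_sym.
    have -> : (Posz j.+1 == - Posz n.+1) = false by [].
    by case: (n == j); rewrite /= ?mulr0n ?mulr1n; ring.
  by rewrite pick; case: ltnP => // jM; rewrite x_out.
rewrite (eq_bigr (fun n => if n == j then - lam ^+ n.+1 * x n.+1%:Z else 0)) => [|n _];
  last first.
  have -> : (Negz j == Posz n.+1) = false by [].
  have -> : (Negz j == - Posz n.+1) = (n == j) by rewrite eq_sym.
  by case: (n == j); rewrite /= ?mulr0n ?mulr1n; ring.
rewrite pick (_ : Negz j = - j.+1%:Z) // hx; case: ltnP => // jM.
by rewrite x_out ?mulr0.
Qed.

Hypothesis lam_neq0 : lam != 0.

Lemma sigma_fixed_Ogen n : sigma_fixed (Ogen lam n.+1).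
Proof.
move=> a; rewrite !OgenE !eqr_oppLR opprK.
have [->|_] := eqVneq a n.+1; first by rewrite /= -exprnP mulr0n; ring.
have [->|_] := eqVneq a (- n.+1%:Z); last by rewrite /= mulr0n; ring.
rewrite /= mulr0n !mulr1n -invr_expz -exprnP; field.
exact: expf_neq0.
Qed.

Lemma sigma_fixed_supp x :
  sigma_fixed x -> {subset finsupp x <= [seq - a | a <- finsupp x]}.
Proof.
move=> hx a; rewrite mem_finsupp => xa; apply/mapP; exists (- a); last by rewrite opprK.
by rewrite mem_finsupp hx mulf_neq0 // oppr_eq0 expfz_neq0.
Qed.

Lemma sigma_fixed_wbr f g :
  sigma_fixed f -> sigma_fixed g -> sigma_fixed (wbr f g).
Proof.
move=> hf hg n.
have uniq_opp (r : {fset int}) : uniq [seq - a | a <- r].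
  by rewrite map_inj_uniq ?fset_uniq //; exact: oppr_inj.
rewrite (wbrE (uniq_opp _) (uniq_opp _) (sigma_fixed_supp hf) (sigma_fixed_supp hg)).
rewrite (wbrE (r := finsupp f) (s := finsupp g)) ?fset_uniq //= big_map mulr_sumr.
apply: eq_bigr => a _; rewrite big_map mulr_sumr.
apply: eq_big => [b | b /eqP abn]; first by rewrite -opprD eqr_opp.
have -> : n = a + b by rewrite -(opprK n) -abn opprD !opprK.
by rewrite hf hg expfzDr //; ring.
Qed.

Lemma inO_sigma_fixed x : inO lam x -> sigma_fixed x.
Proof.
apply: inO_ind; [exact: sigma_fixed0 | exact: sigma_fixed_add |
  exact: sigma_fixed_scale | exact: sigma_fixed_Ogen].
Qed.

Lemma inO_wbr x y : (2%:R : k) != 0 -> inO lam x -> inO lam y -> inO lam (wbr x y).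
Proof.
move=> two_neq0 /inO_sigma_fixed hx /inO_sigma_fixed hy.
exact/sigma_fixed_inO/sigma_fixed_wbr.
Qed.

Definition parity_pow (j : int) : k := (j %% 2)%Z%:~R * lam ^ (j %/ 2)%Z.

Definition weight (j : int) : k := j%:~R * parity_pow j.

Lemma parity_powMDl m j : parity_pow (m * 2 + j) = lam ^ m * parity_pow j.
Proof. by rewrite /parity_pow modzMDl divzMDl // expfzDr //; ring. Qed.

Lemma wdot_wbr_Ogen n m : wdot weight (wbr (Ogen lam n) (Ogen lam m)) = 0.
Proof.
rewrite wbr_addl !wbr_addr !wbr_scalel !wbr_scaler !wbr_Lb.
rewrite !wdot_add !wdot_scale !wdot_Lb /weight.
set s := - n%:Z + - m%:Z.
have shift (p j : int) : j = p * 2 + s -> parity_pow j = lam ^ p * parity_pow s.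
  by move=> ->; rewrite parity_powMDl.
rewrite (shift (n%:Z + m%:Z) (n%:Z + m%:Z)); last by rewrite /s; ring.
rewrite (shift n (n%:Z + - m%:Z)); last by rewrite /s; ring.
rewrite (shift m (- n%:Z + m%:Z)); last by rewrite /s; ring.
rewrite expfzDr // -!exprnP; ring.
Qed.

Lemma wdot_wbr_inO f g : inO lam f -> inO lam g -> wdot weight (wbr f g) = 0.
Proof.
move=> Of Og; move: f Of; apply: inO_ind => [|f1 f2 IH1 IH2|c f IH|n].
- by rewrite wbr0l wdot0.
- by rewrite wbr_addl wdot_add IH1 IH2 addr0.
- by rewrite wbr_scalel wdot_scale IH mulr0.
move: g Og; apply: inO_ind => [|g1 g2 IH1 IH2|c g IH|m].
- by rewrite wbr0r wdot0.
- by rewrite wbr_addr wdot_add IH1 IH2 addr0.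
- by rewrite wbr_scaler wdot_scale IH mulr0.
exact: wdot_wbr_Ogen.
Qed.

Lemma inDerO_wdot x : inDerO lam x -> wdot weight x = 0.
Proof.
case=> s [Os ->]; rewrite wdot_wsum big_map big1_seq // => p /andP [_ /Os [Op1 Op2]].
exact: wdot_wbr_inO.
Qed.

Lemma wdot_Ogen1 : wdot weight (Ogen lam 1) = 2%:R.
Proof.
rewrite wdot_add wdot_scale !wdot_Lb /weight /parity_pow.
rewrite (_ : (1 %% 2)%Z = 1) // (_ : (1 %/ 2)%Z = 0) //.
rewrite (_ : (- 1 %% 2)%Z = 1) // (_ : (- 1 %/ 2)%Z = - 1) //.
by rewrite expr0z -invr_expz expr1z; field.
Qed.

Lemma wdot_Ogen2 : wdot weight (Ogen lam 2) = 0.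
Proof.
rewrite wdot_add wdot_scale !wdot_Lb /weight /parity_pow.
by rewrite (_ : (2 %% 2)%Z = 0) // (_ : (- 2 %% 2)%Z = 0) // !mul0r !mulr0 addr0.
Qed.

Lemma O_ideal_ker :
  (2%:R : k) != 0 -> O_ideal lam (fun x => inO lam x /\ wdot weight x = 0).
Proof.
move=> two_neq0; split.
- by move=> x [].
- by split; [exists [::] | exact: wdot0].
- move=> x y [Ox wx] [Oy wy].
  by split; [exact: inO_add | rewrite wdot_add wx wy addr0].
- by move=> c x [Ox wx]; split; [exact: inO_scale | rewrite wdot_scale wx mulr0].
- by move=> x y Ox [Oy _]; split; [exact: inO_wbr | exact: wdot_wbr_inO].
Qed.

End SubalgebraO.

Theorem corollary4p19 (k : fieldType) (hchar : [pchar k] =i pred0)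
  (lam : k) (hlam : lam != 0) :
  ~ O_perfect lam /\ ~ O_simple lam.
Proof.
have two_neq0 : (2%:R : k) != 0 by rewrite ((pcharf0P k).1 hchar).
have wdot_Ogen1_neq0 : wdot (weight lam) (Ogen lam 1) != 0 by rewrite wdot_Ogen1.
split.
  move=> perfect; move/eqP: wdot_Ogen1_neq0; apply.
  exact/inDerO_wdot/perfect/(inO_Ogen lam 0).
case=> _ /(_ _ (O_ideal_ker hlam two_neq0)) [ker0 | kerO].
  move/eqP: (Ogen_neq0 lam 1); apply; apply: ker0.
  by split; [exact: inO_Ogen | exact: wdot_Ogen2].
have [_ wdot_Ogen1_eq0] := kerO _ (inO_Ogen lam 0).
by rewrite wdot_Ogen1_eq0 eqxx in wdot_Ogen1_neq0.
Qed.
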